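(* Let $G$ be a strongly chordal finite simple graph with at least one edge. Then $G$ has a simplicial edge $e$ such that $G\setminus e$ is strongly chordal. Moreover, $e$ can be chosen so that, in addition, if $G$ is claw-free then $G\setminus e$ is claw-free.
   Context: A graph is chordal if it has no induced cycle of length at least $4$. A perfect elimination order of $G$ is an ordering $v_1,\dots,v_n$ of the vertices such that whenever $v_iv_j,v_iv_k\in E(G)$ with $i<j,k$, then $v_jv_k\in E(G)$. A strong elimination order is a perfect elimination order such that whenever $v_iv_k, v_kv_j, v_iv_\ell\in E(G)$ with $i<k<\ell$ and $i<j$, then $v_jv_\ell\in E(G)$. $G$ is strongly chordal if it has a strong elimination order. A clique is a set of vertices inducing a complete graph. For a chordal graph $G$, a simplicial edge is an edge $e$ contained in exactly one maximal clique of $G$ and such that $G\setminus e$ (delete the edge, keep all vertices) is chordal. The claw is $K_{1,3}$; claw-free means no induced claw. *)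

From mathcomp Require Import all_boot.
Set Implicit Arguments. Unset Strict Implicit. Unset Printing Implicit Defensive.

Definition simple_graph (T : finType) (e : rel T) : Prop :=
  symmetric e /\ irreflexive e.

Definition del_edge (T : finType) (e : rel T) (u v : T) : rel T :=
  fun x y => e x y && ~~ (((x == u) && (y == v)) || ((x == v) && (y == u))).

(* Induced cycle of length >= 4, given as a duplicate-free sequence of
   vertices c_0, ..., c_{n-1}: c_i c_j adjacent iff i, j are cyclically
   consecutive. *)
Definition induced_cycle (T : finType) (e : rel T) (c : seq T) : Prop :=
  [/\ uniq c, 4 <= size c &
      forall x0 i j, i < size c -> j < size c -> i != j ->
        e (nth x0 c i) (nth x0 c j) =
          ((j == i.+1 %% size c) || (i == j.+1 %% size c))].

Definition chordal (T : finType) (e : rel T) : Prop :=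
  forall c : seq T, ~ induced_cycle e c.

Definition vertex_order (T : finType) (s : seq T) : Prop :=
  uniq s /\ forall x : T, x \in s.

Definition perfect_elim_order (T : finType) (e : rel T) (s : seq T) : Prop :=
  vertex_order s /\
  forall vi vj vk : T,
    index vi s < index vj s -> index vi s < index vk s ->
    e vi vj -> e vi vk -> vj != vk -> e vj vk.

Definition strong_elim_order (T : finType) (e : rel T) (s : seq T) : Prop :=
  perfect_elim_order e s /\
  forall vi vj vk vl : T,
    index vi s < index vk s -> index vk s < index vl s ->
    index vi s < index vj s ->
    e vi vk -> e vk vj -> e vi vl -> vj != vl -> e vj vl.

Definition strongly_chordal (T : finType) (e : rel T) : Prop :=
  exists s : seq T, strong_elim_order e s.

Definition clique (T : finType) (e : rel T) (Q : {set T}) : Prop :=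
  forall x y, x \in Q -> y \in Q -> x != y -> e x y.

Definition maximal_clique (T : finType) (e : rel T) (Q : {set T}) : Prop :=
  clique e Q /\ forall Q' : {set T}, clique e Q' -> Q \subset Q' -> Q' = Q.

Definition simplicial_edge (T : finType) (e : rel T) (u v : T) : Prop :=
  [/\ e u v,
      (exists! Q : {set T}, maximal_clique e Q /\ u \in Q /\ v \in Q) &
      chordal (del_edge e u v)].

Definition claw_free (T : finType) (e : rel T) : Prop :=
  ~ exists c a b d : T,
      [/\ e c a, e c b, e c d,
          [/\ a != b, a != d & b != d] &
          [/\ ~~ e a b, ~~ e a d & ~~ e b d]].

From mathcomp Require Import all_boot.
From mathcomp Require Import zify.
Set Implicit Arguments. Unset Strict Implicit. Unset Printing Implicit Defensive.

(* Let [a] be the first vertex of a strong elimination order that has a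
   neighbour, and [b] the last neighbour of [a].  The order never forces an
   edge at [a] (its conclusions concern vertices later than some vertex with
   a neighbour), so it remains a strong elimination order of G \ ab; hence
   G \ ab is strongly chordal and chordal.  N[a] is a clique and is the only
   maximal clique containing [a].  Finally, a claw of G \ ab absent from G
   would have two leaves [a], [b] and a third leaf [r] adjacent to the centre
   [c] but not to [b]; since a < c < b and a < r, the strong property applied
   to the edges ac, cr, ab gives rb, a contradiction. *)

Lemma succ_modn (i n : nat) : i < n -> i.+1 %% n = if i.+1 == n then 0 else i.+1.
Proof.
move=> lt_in; case: eqP => [->|ne]; first by rewrite modnn.
by rewrite modn_small //; lia.
Qed.

Lemma induced_cycle_cherry (T : finType) (e : rel T) (c : seq T) (x : T) :
  induced_cycle e c -> x \in c ->
  exists y z, [/\ [/\ y \in c, z \in c, y != x, z != x & y != z],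
                  e x y, e x z & ~~ e y z].
Proof.
move=> [uc size_c ce] xc; set n := size c in size_c ce.
have lt_in : index x c < n by rewrite index_mem.
set i := index x c in lt_in.
pose i_succ := if i.+1 == n then 0 else i.+1.
pose i_pred := if i == 0 then n.-1 else i.-1.
have lt_isucc_n : i_succ < n by rewrite /i_succ; case: ifP => /eqP; lia.
have lt_ipred_n : i_pred < n by rewrite /i_pred; case: ifP => /eqP; lia.
have nth_neq j k : j < n -> k < n -> j != k -> nth x c j != nth x c k.
  by move=> ltj ltk; rewrite nth_uniq.
have x_def : nth x c i = x by rewrite nth_index.
exists (nth x c i_succ), (nth x c i_pred).
split; first split.
- exact: mem_nth.
- exact: mem_nth.
- rewrite -{2}x_def; apply: nth_neq => //.
  by rewrite /i_succ; case: ifP => /eqP; lia.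
- rewrite -{2}x_def; apply: nth_neq => //.
  by rewrite /i_pred; case: ifP => /eqP; lia.
- by apply: nth_neq => //; rewrite /i_succ /i_pred; repeat case: ifP => /eqP ?; lia.
- rewrite -{1}x_def ce //; last by rewrite /i_succ; case: ifP => /eqP; lia.
  by rewrite !succ_modn // /i_succ; repeat case: ifP => /eqP ?; lia.
- rewrite -{1}x_def ce //; last by rewrite /i_pred; case: ifP => /eqP; lia.
  by rewrite !succ_modn // /i_pred; repeat case: ifP => /eqP ?; lia.
- rewrite ce //; last by rewrite /i_succ /i_pred; repeat case: ifP => /eqP ?; lia.
  rewrite !succ_modn // /i_succ /i_pred.
  by case: (i.+1 =P n) => ?; case: (i =P 0) => ?; repeat case: ifP => /eqP ?; lia.
Qed.

Lemma vertex_order_index_inj (T : finType) (s : seq T) :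
  vertex_order s -> injective (index^~ s).
Proof. by move=> [_ s_all] x y; apply: index_inj. Qed.

Lemma perfect_elim_order_chordal (T : finType) (e : rel T) (s : seq T) :
  perfect_elim_order e s -> chordal e.
Proof.
move=> [s_order s_peo] c c_ind.
have [x0 x0c] : exists x0, x0 \in c.
  by case: c c_ind => [[_]|x c' _] //; exists x; rewrite mem_head.
have [x xc x_min] := arg_minnP (index^~ s) x0c.
have [y [z [[yc zc yx zx yz] exy exz nyz]]] := induced_cycle_cherry c_ind xc.
have x_before w : w \in c -> w != x -> index x s < index w s.
  move=> wc wx; rewrite ltn_neqAle x_min // andbT.
  by apply: contra wx => /eqP/vertex_order_index_inj-> //; rewrite eqxx.
by move: nyz; rewrite (s_peo x y z) ?x_before.
Qed.

Lemma del_edge_sym (T : finType) (e : rel T) (a b : T) :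
  symmetric e -> symmetric (del_edge e a b).
Proof.
move=> e_sym x y; rewrite /del_edge e_sym.
by case: (x == a); case: (x == b); case: (y == a); case: (y == b);
  rewrite /= ?andbT ?andbF ?orbF.
Qed.

Lemma del_edge_sub (T : finType) (e : rel T) (a b x y : T) :
  del_edge e a b x y -> e x y.
Proof. by case/andP. Qed.

Lemma del_edge_away (T : finType) (e : rel T) (a b x y : T) :
  y != a -> y != b -> del_edge e a b x y = e x y.
Proof. by move=> ya yb; rewrite /del_edge (negbTE ya) (negbTE yb) !andbF andbT. Qed.

Lemma del_edge_nonadj (T : finType) (e : rel T) (a b x y : T) :
  e x y -> ~~ del_edge e a b x y -> (x == a) && (y == b) || (x == b) && (y == a).
Proof. by rewrite /del_edge => -> /=; rewrite negbK. Qed.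

Section FirstEdge.

Variables (T : finType) (e : rel T) (s : seq T) (a b : T).
Hypothesis e_sym : symmetric e.
Hypothesis e_irr : irreflexive e.
Hypothesis s_strong : strong_elim_order e s.
Hypothesis a_first : forall x y, e x y -> index a s <= index x s.

Let s_index_inj : injective (index^~ s) :=
  vertex_order_index_inj s_strong.1.1.

Lemma adj_neq (x y : T) : e x y -> x != y.
Proof. by apply: contraTneq => ->; rewrite e_irr. Qed.

Lemma first_vertex_before (x y : T) : e x y -> x != a -> index a s < index x s.
Proof.
move=> exy xa; rewrite ltn_neqAle (a_first exy) andbT.
by apply: contra xa => /eqP/s_index_inj->.
Qed.

Lemma first_vertex_nbr_after (y : T) : e a y -> index a s < index y s.
Proof.
move=> eay; have eya : e y a by rewrite e_sym.
exact: first_vertex_before eya (adj_neq eya).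
Qed.

Lemma strong_elim_order_del_first_edge : strong_elim_order (del_edge e a b) s.
Proof.
have [[s_order s_peo] s_str] := s_strong.
have not_a w x y : e w x -> index w s < index y s -> y != a.
  by move=> ewx lt_wy; apply: contraTneq lt_wy => ->; rewrite -leqNgt (a_first ewx).
split; first split=> //.
  move=> vi vj vk lt_ij lt_ik /del_edge_sub eij /del_edge_sub eik njk.
  by rewrite /del_edge (s_peo vi) //= (negbTE (not_a _ _ _ eij lt_ij))
    (negbTE (not_a _ _ _ eij lt_ik)) andbF.
move=> vi vj vk vl lt_ik lt_kl lt_ij /del_edge_sub eik /del_edge_sub ekj.
move=> /del_edge_sub eil njl; have lt_il := ltn_trans lt_ik lt_kl.
by rewrite /del_edge (s_str vi vj vk vl) //= (negbTE (not_a _ _ _ eik lt_ij))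
  (negbTE (not_a _ _ _ eik lt_il)) andbF.
Qed.

Hypothesis eab : e a b.
Hypothesis b_last : forall y, e a y -> index y s <= index b s.

Let Na := a |: [set y | e a y].

Lemma closed_nbhd_clique : clique e Na.
Proof.
have [[_ s_peo] _] := s_strong.
move=> x y; rewrite !inE => /predU1P[->|ax] /predU1P[->|ay] nxy //.
- by rewrite eqxx in nxy.
- by rewrite e_sym.
- exact: (s_peo a x y (first_vertex_nbr_after ax) (first_vertex_nbr_after ay)).
Qed.

Lemma clique_first_vertex_sub (Q : {set T}) :
  clique e Q -> a \in Q -> Q \subset Na.
Proof.
move=> cQ aQ; apply/subsetP => y yQ; rewrite !inE.
by case: (eqVneq y a) => //= ya; apply: cQ; rewrite // eq_sym.
Qed.

Lemma closed_nbhd_maximal_clique : maximal_clique e Na.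
Proof.
split=> [|Q cQ sub]; first exact: closed_nbhd_clique.
apply/eqP; rewrite eqEsubset sub clique_first_vertex_sub //.
by apply: (subsetP sub); rewrite !inE eqxx.
Qed.

Lemma simplicial_first_edge : simplicial_edge e a b.
Proof.
split=> //; last first.
  exact: perfect_elim_order_chordal strong_elim_order_del_first_edge.1.
exists Na; split.
  by split; [exact: closed_nbhd_maximal_clique | rewrite !inE eqxx eab orbT].
move=> Q [[cQ Q_max] [aQ _]].
by apply: Q_max; [exact: closed_nbhd_clique | exact: clique_first_vertex_sub].
Qed.

Lemma last_nbr_dominates (c r : T) :
  e c a -> e c b -> e c r -> r != a -> r != b -> e b r.
Proof.
move=> eca ecb ecr ra rb; have eac : e a c by rewrite e_sym.
have lt_ac := first_vertex_nbr_after eac.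
have lt_cb : index c s < index b s.
  rewrite ltn_neqAle b_last // andbT.
  by apply: contraTneq ecb => /s_index_inj->; rewrite e_irr.
have lt_ar : index a s < index r s by apply: (@first_vertex_before _ c); rewrite 1?e_sym.
by rewrite e_sym (s_strong.2 a r c b).
Qed.

Lemma del_first_edge_claw_leaves (c x y z : T) :
  e c x -> e c y -> e c z -> x != z -> y != z ->
  ~~ del_edge e a b x z -> ~~ del_edge e a b y z -> ~~ del_edge e a b x y ->
  ~~ e x y.
Proof.
move=> ecx ecy ecz xz yz nxz nyz nxy; apply/negP => exy.
have [za zb] : z != a /\ z != b.
  by case/orP: (del_edge_nonadj exy nxy) => /andP[/eqP<- /eqP<-]; rewrite !(eq_sym z).
rewrite (del_edge_away _ _ za zb) in nxz; rewrite (del_edge_away _ _ za zb) in nyz.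
case/orP: (del_edge_nonadj exy nxy) => /andP[/eqP ? /eqP ?]; subst x y.
- by move: nyz; rewrite (last_nbr_dominates ecx ecy ecz).
- by move: nxz; rewrite (last_nbr_dominates ecy ecx ecz).
Qed.

Lemma claw_free_del_first_edge : claw_free e -> claw_free (del_edge e a b).
Proof.
move=> e_cf [c [x [y [z [/del_edge_sub ecx /del_edge_sub ecy /del_edge_sub ecz]]]]].
move=> [xy xz yz] [nxy nxz nyz]; have dsym := del_edge_sym a b e_sym.
apply: e_cf; exists c, x, y, z; split=> //; split.
- exact: (del_first_edge_claw_leaves ecx ecy ecz).
- by apply: (del_first_edge_claw_leaves ecx ecz ecy); rewrite // 1?eq_sym // dsym.
- by apply: (del_first_edge_claw_leaves ecy ecz ecx); rewrite // 1?eq_sym // dsym.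
Qed.

End FirstEdge.

Theorem lemma2p5 (T : finType) (e : rel T) :
  simple_graph e ->
  strongly_chordal e ->
  (exists x y : T, e x y) ->
  exists u v : T,
    [/\ simplicial_edge e u v,
        strongly_chordal (del_edge e u v) &
        (claw_free e -> claw_free (del_edge e u v))].
Proof.
move=> [e_sym e_irr] [s s_strong] [x0 [y0 exy0]].
have x0_has_nbr : [exists y, e x0 y] by apply/existsP; exists y0.
have [a /existsP[b0 eab0] a_min] :=
  arg_minnP (P := fun x => [exists y, e x y]) (index^~ s) x0_has_nbr.
have a_first x y : e x y -> index a s <= index x s.
  by move=> exy; apply: a_min; apply/existsP; exists y.
have [b eab b_last] := arg_maxnP (index^~ s) eab0.
exists a, b; split.
- exact: simplicial_first_edge e_sym e_irr s_strong a_first eab.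
- exists s; exact: strong_elim_order_del_first_edge b s_strong a_first.
- exact: claw_free_del_first_edge e_sym e_irr s_strong a_first eab b_last.
Qed.
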